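(* Let $S$ be an irreducible $\mathcal{C}$-semigroup with Frobenius vector $\mathbf f$, and let $\mathbf x\in I_S(\mathbf f)$ be a minimal generator of $S$ such that (1) $2\mathbf x-\mathbf f\notin S$, (2) $3\mathbf x\neq 2\mathbf f$, and (3) $4\mathbf x\neq 3\mathbf f$. Then $S'=(S\setminus\{\mathbf x\})\cup\{\mathbf f-\mathbf x\}$ is an irreducible $\mathcal{C}$-semigroup with Frobenius vector $\mathbf f$.
   Context: An integer cone $\mathcal{C}\subseteq\mathbb{N}^p$ is the set of integer points of a finitely generated rational cone in $\mathbb{Q}_{\ge0}^p$. A $\mathcal{C}$-semigroup is a subset $S\subseteq\mathcal{C}$ containing $0$, closed under addition, with $\mathcal{C}\setminus S$ finite; $\mathcal{H}(S)=\mathcal{C}\setminus S$. A minimal generator of $S$ is an element of its (unique) minimal generating set, i.e. a nonzero element of $S$ not expressible as a sum of two nonzero elements of $S$. A monomial order $\preceq$ on $\mathbb{N}^p$ is fixed (total order, compatible with addition, $\mathbf 0\preceq\mathbf c$ for all $\mathbf c$); the Frobenius vector is $F(S)=\max_\preceq\mathcal{H}(S)$. $\mathrm{PF}(S)=\{\mathbf y\in\mathcal{H}(S)\mid\mathbf y+(S\setminus\{0\})\subseteq S\}$; $S$ is irreducible if $\mathrm{PF}(S)=\{F(S)\}$ or $\mathrm{PF}(S)=\{F(S),F(S)/2\}$. $\mathbf x\le_{\mathcal{C}}\mathbf y$ means $\mathbf y-\mathbf x\in\mathcal{C}$, and $I_S(\mathbf n)=\{\mathbf s\in S\mid \mathbf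 s\le_{\mathcal{C}}\mathbf n\}$. The condition $2\mathbf x-\mathbf f\notin S$ is understood in $\mathbb{Z}^p$ (it holds in particular when $2\mathbf x-\mathbf f\notin\mathbb{N}^p$). *)

From HB Require Import structures.
From mathcomp Require Import all_boot all_order all_algebra.
Set Implicit Arguments. Unset Strict Implicit. Unset Printing Implicit Defensive.
Import Order.TTheory GRing.Theory Num.Theory.

Definition vec (p : nat) := {ffun 'I_p -> nat}.

Definition vzero p : vec p := [ffun => 0%N].
Definition vadd p (x y : vec p) : vec p := [ffun i => (x i + y i)%N].
Definition vscale p (n : nat) (x : vec p) : vec p := [ffun i => (n * x i)%N].
(* pointwise (truncated) subtraction; only used when y <=_C x, where it is
   the genuine difference *)
Definition vsub p (x y : vec p) : vec p := [ffun i => (x i - y i)%N].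

Definition integer_cone p (C : vec p -> Prop) : Prop :=
  exists (k : nat) (g : 'I_k -> 'I_p -> rat),
    (forall j i, (0 <= g j i)%R) /\
    forall x : vec p, C x <->
      exists lam : 'I_k -> rat, (forall j, (0 <= lam j)%R) /\
        forall i, ((x i)%:R : rat) = (\sum_(j < k) lam j * g j i)%R.

Definition finite_set p (A : vec p -> Prop) : Prop :=
  exists l : seq (vec p), forall x, A x -> x \in l.

Definition hole p (C S : vec p -> Prop) (x : vec p) : Prop := C x /\ ~ S x.

Definition C_semigroup p (C S : vec p -> Prop) : Prop :=
  (forall x, S x -> C x) /\ S (vzero p) /\
  (forall x y, S x -> S y -> S (vadd x y)) /\
  finite_set (hole C S).

Definition monomial_order p (le : rel (vec p)) : Prop :=
  (forall x, le x x) /\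
  (forall x y, le x y -> le y x -> x = y) /\
  (forall x y z, le x y -> le y z -> le x z) /\
  (forall x y, le x y \/ le y x) /\
  (forall x y z, le x y -> le (vadd x z) (vadd y z)) /\
  (forall x, le (vzero p) x).

Definition frobenius p (le : rel (vec p)) (C S : vec p -> Prop) (f : vec p) :=
  hole C S f /\ forall h, hole C S h -> le h f.

Definition pseudo_frobenius p (C S : vec p -> Prop) (y : vec p) : Prop :=
  hole C S y /\ forall s, S s -> s <> vzero p -> S (vadd y s).

Definition irreducible p (le : rel (vec p)) (C S : vec p -> Prop) : Prop :=
  exists f, frobenius le C S f /\
    ((forall y, pseudo_frobenius C S y <-> y = f) \/
     (exists h, vadd h h = f /\
        forall y, pseudo_frobenius C S y <-> (y = f \/ y = h))).

Definition minimal_generator p (S : vec p -> Prop) (x : vec p) : Prop :=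
  S x /\ x <> vzero p /\
  ~ (exists a b, S a /\ S b /\ a <> vzero p /\ b <> vzero p /\ x = vadd a b).

Definition leC p (C : vec p -> Prop) (x y : vec p) : Prop :=
  exists c, C c /\ vadd x c = y.

(* The proof rests on the symmetry of irreducible C-semigroups: every hole h
   of S satisfies f - h \in S or 2h = f.  This follows from two general facts
   proved first: every hole lies below a pseudo-Frobenius vector (climb
   through holes along the monomial order, which terminates since there are
   finitely many holes), and the pseudo-Frobenius vectors of an irreducible S
   are f and possibly f/2.

   Writing c = f - x, the section [Exchange] then shows, under this symmetry,
   that S' is closed under addition (hypotheses (1)-(3) exclude the sums
   a + c and c + c from being holes or equal to x), that its only new hole
   is x (so f stays its Frobenius vector), that f is pseudo-Frobenius in S',
   and that any other pseudo-Frobenius vector y of S' satisfies 2y = f. *)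
From mathcomp Require Import all_boot all_order all_algebra.
From mathcomp Require Import zify.
From Stdlib Require Import Classical.
Set Implicit Arguments. Unset Strict Implicit.
Import GRing.Theory Num.Theory.

(* [vec_eq] proves an identity between vectors built from vadd, vscale, vsub
   and vzero, using the vector equations in the context: all of them are
   read coordinatewise and the resulting linear arithmetic is left to lia. *)
Ltac vec_coord i := repeat match goal with H : _ = _ |- _ =>
  move/ffunP: H => /(_ i); rewrite /vadd /vscale /vsub /vzero ?ffunE /= => H end.
Ltac vec_eq := let i := fresh "i" in apply/ffunP => i; vec_coord i;
  rewrite /vadd /vscale /vsub /vzero ?ffunE /=; lia.

Lemma cone_add p (C : vec p -> Prop) : integer_cone C ->
  forall a b, C a -> C b -> C (vadd a b).
Proof.
move=> [k [g [_ HC]]] a b /HC [la [la0 Ha]] /HC [lb [lb0 Hb]]; apply/HC.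
exists (fun j => la j + lb j)%R; split => [j|i]; first by rewrite addr_ge0.
rewrite ffunE natrD Ha Hb -big_split /=; apply: eq_bigr => j _.
by rewrite mulrDl.
Qed.

Lemma le_addr p (le : rel (vec p)) : monomial_order le ->
  forall a t, le a (vadd a t).
Proof.
move=> [_ [_ [_ [_ [ladd l0]]]]] a t.
have := ladd _ _ a (l0 t).
have -> : vadd (vzero p) a = a by vec_eq.
by have -> : vadd t a = vadd a t by vec_eq.
Qed.

Lemma count_lt (T : eqType) (a1 a2 : pred T) (l : seq T) z :
  (forall w, a1 w -> a2 w) -> z \in l -> a2 z -> ~~ a1 z ->
  count a1 l < count a2 l.
Proof.
move=> Hsub; elim: l => //= w l IH; rewrite inE => /orP [/eqP<-|Hz] H2 H1.
  rewrite (negbTE H1) H2 add0n add1n ltnS; exact: sub_count.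
have Hw : (a1 w : nat) <= a2 w by case E: (a1 w) => //; rewrite (Hsub _ E).
have := IH Hz H2 H1; lia.
Qed.

Section PseudoFrobenius.
Variables (p : nat) (le : rel (vec p)) (C S : vec p -> Prop).
Hypotheses (Hle : monomial_order le) (HC : integer_cone C)
  (HS : C_semigroup C S).

(* Number of items of l strictly above h in the order le; it decreases when
   h moves up to a hole h + s with s \in S \ {0}. *)
Definition above (l : seq (vec p)) (h : vec p) : nat :=
  count (fun z => le h z && (z != h)) l.

Lemma above_add l h s : (forall y, hole C S y -> y \in l) ->
  hole C S (vadd h s) -> s <> vzero p -> above l (vadd h s) < above l h.
Proof.
move: Hle => [_ [lanti [ltrans _]]] Hl hhs s0.
have hne : vadd h s != h by apply/eqP => E; apply: s0; vec_eq.
apply: (@count_lt _ _ _ l (vadd h s)); last by rewrite eqxx andbF.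
- move=> w /andP [l1 n1]; apply/andP; split.
    exact: ltrans (le_addr Hle h s) l1.
  apply/eqP => E; subst w; move/eqP: hne; apply.
  by apply: lanti => //; exact: le_addr.
- exact: Hl.
- by rewrite le_addr // hne.
Qed.

Lemma hole_climb h : hole C S h -> ~ pseudo_frobenius C S h ->
  exists s, S s /\ s <> vzero p /\ hole C S (vadd h s).
Proof.
move: HS => [SC _] Hh nPF.
apply: NNPP => N; apply: nPF; split=> // s Ss s0.
apply: NNPP => Nhs; apply: N; exists s; do 3 split => //.
by apply: cone_add => //; [exact: Hh.1|exact: SC].
Qed.

(* Every hole h lies below a pseudo-Frobenius vector: h + s \in PF(S) for
   some s \in S.  Climbing decreases [above], so the climb terminates. *)
Lemma hole_below_PF h : hole C S h ->
  exists y s, pseudo_frobenius C S y /\ S s /\ vadd h s = y.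
Proof.
move: HS => [_ [S0 [Sadd [l Hl]]]].
suff: forall n h, above l h < n -> hole C S h ->
    exists y s, pseudo_frobenius C S y /\ S s /\ vadd h s = y.
  by move=> /(_ (above l h).+1 h (ltnSn _)).
elim=> // n IH {}h Hn Hh.
case: (classic (pseudo_frobenius C S h)) => [PF|nPF].
  by exists h, (vzero p); do 2 split => //; vec_eq.
have [s [Ss [s0 hhs]]] := hole_climb Hh nPF.
have Hlt : above l (vadd h s) < n by apply: leq_trans (above_add Hl hhs s0) Hn.
have [y [s' [PFy [Ss' E]]]] := IH (vadd h s) Hlt hhs.
exists y, (vadd s s'); do 2 split => //; first exact: Sadd.
vec_eq.
Qed.

Lemma frobenius_unique f f' :
  frobenius le C S f -> frobenius le C S f' -> f = f'.
Proof.
move: Hle => [_ [lanti _]] [hf Hm] [hf' Hm'].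
by apply: lanti; [exact: Hm'|exact: Hm].
Qed.

(* The pseudo-Frobenius vector above h is f or f/2; in the latter
   case either h = f/2 or h + s = f/2 with s <> 0, whence f - h = f/2 + s. *)
Lemma irreducible_symmetric f :
  irreducible le C S -> frobenius le C S f ->
  forall h, hole C S h -> (exists s, S s /\ vadd h s = f) \/ vadd h h = f.
Proof.
move=> [f' [Hf' Hcase]] Hf h Hh.
have Ef := frobenius_unique Hf' Hf; subst f'.
have [y [s [PFy [Ss E]]]] := hole_below_PF Hh.
case: Hcase => [Hy|[h0 [Eh0 Hiff]]].
  by left; exists s; rewrite E; split=> //; apply/Hy.
case: (proj1 (Hiff y) PFy) => Ey; first by left; exists s; rewrite E.
case: (classic (s = vzero p)) => [s0|s0]; first by right; vec_eq.
have PF0 : pseudo_frobenius C S h0 by apply/Hiff; right.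
by left; exists (vadd h0 s); split; [exact: PF0.2|vec_eq].
Qed.

Lemma irreducible_of_PF f : frobenius le C S f ->
  pseudo_frobenius C S f ->
  (forall y, pseudo_frobenius C S y -> y = f \/ vadd y y = f) ->
  irreducible le C S.
Proof.
move=> Hf PFf PFchar; exists f; split=> //.
case: (classic (exists h, pseudo_frobenius C S h /\ vadd h h = f)) =>
  [[h [PFh Eh]]|Nh].
  right; exists h; split=> // y; split; last by case=> ->.
  by move=> /PFchar [->|Ey]; [left|right; vec_eq].
left=> y; split=> [PFy|-> //].
by case: (PFchar y PFy) => // Ey; exfalso; apply: Nh; exists y.
Qed.

End PseudoFrobenius.

Definition exchange p (S : vec p -> Prop) (x c : vec p) : vec p -> Prop :=
  fun y => (S y /\ y <> x) \/ y = c.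

Section Exchange.
Variables (p : nat) (le : rel (vec p)) (C S : vec p -> Prop) (x c : vec p).
(* the Frobenius vector is f = x + c, so that c = f - x with c \in C *)
Local Notation f := (vadd x c).
Hypotheses (Hle : monomial_order le) (HC : integer_cone C)
  (HS : C_semigroup C S) (Hfrob : frobenius le C S f).
(* the symmetry property of [irreducible_symmetric] *)
Hypothesis Hsym :
  forall h, hole C S h -> (exists s, S s /\ vadd h s = f) \/ vadd h h = f.
Hypotheses (Cc : C c) (Sx : S x) (x_nz : x <> vzero p)
  (x_min : ~ (exists a b, S a /\ S b /\ a <> vzero p /\ b <> vzero p /\
                         x = vadd a b)).
Hypotheses (cond1 : ~ (exists s, S s /\ vadd s f = vscale 2 x))
  (cond2 : vscale 3 x <> vscale 2 f) (cond3 : vscale 4 x <> vscale 3 f).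

Let T := exchange S x c.

Lemma exchange_in_C y : T y -> C y.
Proof. by move: HS => [SC _] [[/SC]|->]. Qed.

(* f \notin S', as f \notin S and f = c would force x = 0. *)
Lemma f_notin_exchange : ~ T f.
Proof. by move: Hfrob => [[_ Sf] _] [[/Sf]|E] //; apply: x_nz; vec_eq. Qed.

(* c <> 0, since otherwise f = x \in S. *)
Lemma c_nonzero : c <> vzero p.
Proof.
by move: Hfrob => [[_ Sf] _] E; apply: Sf; have -> : f = x by vec_eq.
Qed.

(* a + c \in S \ {x} for a \in S \ {0, x}: if a + c were a hole, symmetry
   would give x = a + s (against minimality) or 2x - f = 2a \in S
   (against (1)); and a + c = x means 2x - f = a \in S. *)
Lemma add_c_in_exchange a : S a -> a <> x -> a <> vzero p -> T (vadd a c).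
Proof.
move: HS => [SC [_ [Sadd _]]] Sa ax a0; left; split.
  apply: NNPP => Nac.
  have hac : hole C S (vadd a c).
    by split=> //; apply: cone_add => //; exact: SC.
  case: (Hsym hac) => [[s [Ss Es]]|E2].
    case: (classic (s = vzero p)) => [s0|s0]; first by apply: ax; vec_eq.
    by apply: x_min; exists a, s; do 4 (split => //); vec_eq.
  by apply: cond1; exists (vadd a a); split; [exact: Sadd|vec_eq].
by move=> E; apply: cond1; exists a; split=> //; vec_eq.
Qed.

(* c + c \in S \ {x}: if it were a hole, symmetry gives 2x - f \in S
   (against (1)) or 4x = 3f (against (3)); and 2c = x means 3x = 2f. *)
Lemma double_c_in_exchange : T (vadd c c).
Proof.
left; split; last by move=> E; apply: cond2; vec_eq.
apply: NNPP => Ncc.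
have hcc : hole C S (vadd c c) by split=> //; exact: cone_add.
case: (Hsym hcc) => [[s [Ss Es]]|E2].
  by apply: cond1; exists s; split=> //; vec_eq.
by apply: cond3; vec_eq.
Qed.

Lemma exchange_add_c a : T a -> T (vadd a c).
Proof.
case=> [[Sa ax]|->]; last exact: double_c_in_exchange.
case: (classic (a = vzero p)) => [a0|a0]; last exact: add_c_in_exchange.
by rewrite (_ : vadd a c = c); [right|vec_eq].
Qed.

(* S' is closed under addition; sums inside S \ {0} avoid x by minimality. *)
Lemma exchange_add a b : T a -> T b -> T (vadd a b).
Proof.
move: HS => [_ [_ [Sadd _]]] Ta [[Sb bx]|->]; last exact: exchange_add_c.
case: Ta => [[Sa ax]|->]; last first.
  by rewrite (_ : vadd c b = vadd b c); [apply: exchange_add_c; left|vec_eq].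
left; split; first exact: Sadd.
case: (classic (a = vzero p)) => [a0|a0].
  by rewrite (_ : vadd a b = b) //; vec_eq.
case: (classic (b = vzero p)) => [b0|b0].
  by rewrite (_ : vadd a b = a) //; vec_eq.
by move=> E; apply: x_min; exists a, b; do 4 (split => //); rewrite E.
Qed.

Lemma exchange_hole_in_S y : hole C T y -> S y -> y = x.
Proof. by move=> [_ Ny] Sy; apply: NNPP => yx; apply: Ny; left. Qed.

(* S' is a C-semigroup: its holes are among those of S, plus x. *)
Lemma exchange_C_semigroup : C_semigroup C T.
Proof.
move: HS => [SC [S0 [_ [l Hl]]]].
split; first exact: exchange_in_C.
split; first by left; split=> // E; apply: x_nz.
split; first exact: exchange_add.
exists (x :: l) => y [Cy Ny]; rewrite inE.
case: (classic (S y)) => Sy.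
  by rewrite (exchange_hole_in_S (conj Cy Ny) Sy) eqxx.
by rewrite Hl ?orbT.
Qed.

(* The holes of S' are those of S plus x <=_le f, so f is still maximal. *)
Lemma exchange_frobenius : frobenius le C T f.
Proof.
move: Hfrob => [[Cf _] Hmax].
split; first by split=> //; exact: f_notin_exchange.
move=> h [Ch Nh]; case: (classic (S h)) => Sh; last exact: Hmax.
by rewrite (exchange_hole_in_S (conj Ch Nh) Sh); exact: le_addr.
Qed.

(* f is pseudo-Frobenius in S': f + t with t \in S' \ {0} lies strictly
   above f, hence is in S, and differs from x <=_le f. *)
Lemma exchange_PF_f : pseudo_frobenius C T f.
Proof.
move: Hle Hfrob => [_ [lanti _]] [[Cf _] Hmax].
split; first by split=> //; exact: f_notin_exchange.
move=> t Tt t0; left; split.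
  apply: NNPP => N.
  have hft : hole C S (vadd f t).
    by split=> //; apply: cone_add => //; exact: exchange_in_C.
  have E : vadd f t = f by apply: lanti; [exact: Hmax|exact: le_addr].
  by apply: t0; vec_eq.
move=> E; apply: t0.
have lfx := le_addr Hle f t; rewrite E in lfx.
have Exf : x = f by apply: lanti; [exact: le_addr|exact: lfx].
vec_eq.
Qed.

(* Any pseudo-Frobenius y of S' is f or f/2: y is not x (as x + c = f), so
   y is a hole of S; if f - y = s \in S with y <> f, then s <> 0, s <> x
   (else y = c \in S'), and y + s = f \notin S' contradicts y \in PF(S'). *)
Lemma exchange_PF_char y : pseudo_frobenius C T y -> y = f \/ vadd y y = f.
Proof.
move=> [[Cy Ny] Hy].
case: (classic (S y)) => Sy.
  have yx := exchange_hole_in_S (conj Cy Ny) Sy; subst y.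
  by exfalso; apply: f_notin_exchange; apply: Hy; [right|exact: c_nonzero].
case: (Hsym (conj Cy Sy)) => [[s [Ss Es]]|]; last by right.
case: (classic (y = f)) => [->|yf]; first by left.
exfalso.
case: (classic (s = vzero p)) => [s0|s0]; first by apply: yf; vec_eq.
case: (classic (s = x)) => [sx|sx]; first by apply: Ny; right; vec_eq.
by apply: f_notin_exchange; rewrite -Es; apply: Hy => //; left.
Qed.

End Exchange.

Theorem mainTheorem9 (p : nat) (le : rel (vec p)) (C S : vec p -> Prop)
  (f x : vec p) :
  monomial_order le ->
  integer_cone C ->
  C_semigroup C S ->
  irreducible le C S ->
  frobenius le C S f ->
  (* x \in I_S(f) *)
  S x -> leC C x f ->
  minimal_generator S x ->
  (* (1) 2x - f \notin S, in Z^p *)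
  ~ (exists s, S s /\ vadd s f = vscale 2 x) ->
  (* (2), (3) *)
  vscale 3 x <> vscale 2 f ->
  vscale 4 x <> vscale 3 f ->
  let S' := fun y => (S y /\ y <> x) \/ y = vsub f x in
  C_semigroup C S' /\ irreducible le C S' /\ frobenius le C S' f.
Proof.
move=> Hle HC HS Hirr Hfrob Sx [c [Cc Exc]] [_ [x_nz x_min]] cond1 cond2 cond3 S'.
subst f; have Ec : vsub (vadd x c) x = c by vec_eq.
rewrite {}/S' Ec -/(exchange S x c).
have Hsym := irreducible_symmetric Hle HC HS Hirr Hfrob.
have Hfrob' := exchange_frobenius Hle Hfrob x_nz.
split; first exact: exchange_C_semigroup HC HS Hsym Cc x_nz x_min cond1 cond2 cond3.
split=> //; apply: (irreducible_of_PF Hfrob').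
- exact: exchange_PF_f Hle HC HS Hfrob Cc x_nz.
- exact: exchange_PF_char Hfrob Hsym Sx x_nz.
Qed.
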